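(* Let $\mathscr P$ be a finite collection of finite posets. If $\sum_{P\in\mathscr P}K_P(\mathbf x)$ is a symmetric function, then it is $p$-positive, i.e. it is a linear combination of power sum symmetric functions $p_\lambda$ with nonnegative coefficients.
   Context: For a finite poset $P$, $K_P(\mathbf x)=\sum_f\prod_{x\in P}x_{f(x)}$, summed over all maps $f:P\to\mathbb Z_{>0}$ with $x<_Py\Rightarrow f(x)\le f(y)$; this is a quasisymmetric function in $\mathbf x=(x_1,x_2,\dots)$. $p_\lambda$ denotes the power sum symmetric function. *)

From HB Require Import structures.
From mathcomp Require Import all_boot all_order all_algebra.
Set Implicit Arguments. Unset Strict Implicit. Unset Printing Implicit Defensive.
Import Order.TTheory GRing.Theory Num.Theory.

(* Monomials in x_1, x_2, ... are encoded by exponent sequences a : seq nat,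
   where nth 0 a i is the exponent of x_(i+1); trailing zeros are allowed
   (a and a ++ [:: 0] encode the same monomial, and all coefficients below
   agree on them).  A formal power series is given by its coefficient
   function seq nat -> nat (or rat). *)

(* Coefficient of x^a in K_P: number of maps f : P -> {1,..,size a}
   (encoded as 'I_(size a), value i standing for i+1) with
   x <_P y => f x <= f y, and |f^-1(i+1)| = a_i for every i. *)
Definition Kcoef (d : Order.disp_t) (P : finPOrderType d) (a : seq nat) : nat :=
  #|[set f : {ffun P -> 'I_(size a)} |
      [forall x : P, forall y : P, (x < y)%O ==> (f x <= f y)%N] &&
      [forall i : 'I_(size a), #|[set x : P | f x == i]| == nth 0 a i]]|.

(* Coefficient of x^a in p_l = prod_j (sum_i x_i^(l_j)): number of ways to
   choose a variable index for each part so that the exponents add to a. *)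
Definition Pcoef (l a : seq nat) : nat :=
  #|[set g : {ffun 'I_(size l) -> 'I_(size a)} |
      [forall i : 'I_(size a), (\sum_(j < size l | g j == i) nth 0 l j) == nth 0 a i]]|.

Definition is_partition (l : seq nat) : bool := sorted geq l && all (leq 1) l.

From HB Require Import structures.
From mathcomp Require Import all_boot all_order all_algebra zify.
Set Implicit Arguments. Unset Strict Implicit. Unset Printing Implicit Defensive.
Import Order.TTheory GRing.Theory Num.Theory.
Local Open Scope ring_scope.

(* A quasisymmetric function is identified with its coefficient function on
   compositions.  For a composition [al], [pdual al] sums the coefficients at
   the compositions refining [al] block by block, each weighted by a sign and
   by the product of the first parts of the blocks.  Expanding [K_P] along
   chains of upsets of [P] turns [pdual al K_P] into a sum of products of
   one-block values, and by Moebius inversion in the lattice of upsets a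
   one-block value is the weight of the greatest element of the block if
   there is one, and [0] otherwise; so [pdual al K_P >= 0].  Seeing [p_mu] as
   [K] of an antichain with weights [mu], the same computation shows that
   [pdual lam p_mu <> 0] iff [lam = mu] for partitions [lam], [mu].  Finally
   [pdual lam] only sees compositions of [sumn lam] that are at most as long
   as [lam], and sees [lam] with the factor [prod lam], so a symmetric
   function killed by every [pdual lam] vanishes (induction on
   [sumn lam - size lam]).  This applies to [sum_P K_P - sum_mu c_mu p_mu]
   with [c_mu = pdual mu (sum_P K_P) / pdual mu p_mu >= 0]. *)

(** * Alternating sums over compositions *)

(* [alt_sumF fuel m psi b] is the sum of [(-1)^(size c) * psi (c ++ b)] over
   the compositions [c] of [m], provided [m <= fuel]. *)
Fixpoint alt_sumF (fuel m : nat) (psi : seq nat -> rat) (b : seq nat) : rat :=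
  if fuel is fuel'.+1 then
    if m is 0 then psi b
    else - \sum_(j < m) alt_sumF fuel' (m - j.+1) (fun b' => psi (j.+1 :: b')) b
  else psi b.

Definition alt_sum (m : nat) := alt_sumF m m.

Lemma alt_sumF_fuel f g m psi b : (m <= f)%N -> (m <= g)%N ->
  alt_sumF f m psi b = alt_sumF g m psi b.
Proof.
elim: f g m psi b => [|f IH] [|g] [|m] psi b //= hf hg.
by congr (- _); apply: eq_bigr => j _; apply: IH; lia.
Qed.

Lemma alt_sum0 psi b : alt_sum 0 psi b = psi b. Proof. by []. Qed.

Lemma alt_sumS m psi b : (0 < m)%N ->
  alt_sum m psi b = - \sum_(j < m) alt_sum (m - j.+1) (fun b' => psi (j.+1 :: b')) b.
Proof.
case: m => [//|m] _; congr (- _); apply: eq_bigr => j _.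
by apply: alt_sumF_fuel; lia.
Qed.

Lemma eq_alt_sum m psi psi' : psi =1 psi' -> alt_sum m psi =1 alt_sum m psi'.
Proof.
elim/ltn_ind: m psi psi' => -[|m] IH psi psi' e b; first exact: e.
rewrite !alt_sumS //; congr (- _); apply: eq_bigr => j _.
by apply: IH => [|b']; [lia | exact: e].
Qed.

Lemma alt_sum_sum (I : Type) (r : seq I) (P : pred I) (F : I -> seq nat -> rat) m b :
  alt_sum m (fun b => \sum_(i <- r | P i) F i b) b = \sum_(i <- r | P i) alt_sum m (F i) b.
Proof.
elim/ltn_ind: m F b => -[|m] IH F b //.
rewrite alt_sumS //; under [RHS]eq_bigr do rewrite alt_sumS //.
rewrite sumrN exchange_big; congr (- _); apply: eq_bigr => j _.
by rewrite (IH _ _ (fun i b' => F i (j.+1 :: b'))) //; lia.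
Qed.

Lemma alt_sumZ k psi m b : alt_sum m (fun b => k * psi b) b = k * alt_sum m psi b.
Proof.
elim/ltn_ind: m psi b => -[|m] IH psi b //.
rewrite !alt_sumS // mulrN mulr_sumr; congr (- _); apply: eq_bigr => j _.
by rewrite (IH _ _ (fun b' => psi (j.+1 :: b'))) //; lia.
Qed.

Lemma alt_sum_cat m psi b : alt_sum m psi b = alt_sum m (fun c => psi (c ++ b)) [::].
Proof.
elim/ltn_ind: m psi => -[|m] IH psi //.
rewrite !alt_sumS //; congr (- _); apply: eq_bigr => j _.
by rewrite IH //; lia.
Qed.

(* The sum of [(-1)^(size c).-1 * c_1 * psi (c ++ b)] over the compositions
   [c] of [a]. *)
Definition phead (a : nat) (psi : seq nat -> rat) (b : seq nat) : rat :=
  \sum_(j < a) j.+1%:R * alt_sum (a - j.+1) (fun b' => psi (j.+1 :: b')) b.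

Lemma eq_phead a psi psi' : psi =1 psi' -> phead a psi =1 phead a psi'.
Proof.
move=> e b; apply: eq_bigr => j _; congr (_ * _); apply: eq_alt_sum => b'; exact: e.
Qed.

Lemma phead_cat a psi b : phead a psi b = phead a (fun c => psi (c ++ b)) [::].
Proof. by apply: eq_bigr => j _; rewrite alt_sum_cat. Qed.

Lemma phead_sum (I : Type) (r : seq I) (P : pred I) (F : I -> seq nat -> rat) a b :
  phead a (fun b => \sum_(i <- r | P i) F i b) b = \sum_(i <- r | P i) phead a (F i) b.
Proof.
rewrite /phead; under eq_bigr => j _ do rewrite alt_sum_sum mulr_sumr.
exact: exchange_big.
Qed.

Lemma pheadZ k psi a b : phead a (fun b => k * psi b) b = k * phead a psi b.
Proof.
rewrite /phead mulr_sumr; apply: eq_bigr => j _.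
by rewrite (alt_sumZ k (fun b' => psi (j.+1 :: b'))) mulrCA.
Qed.

(* On symmetric functions, [pdual lam] is proportional to the coefficient of
   [p_lam]: see [pdual_Pcoef_neq0]. *)
Fixpoint pdual (al : seq nat) (psi : seq nat -> rat) : rat :=
  if al is a :: al' then pdual al' (phead a psi) else psi [::].

Lemma eq_pdual al psi psi' : psi =1 psi' -> pdual al psi = pdual al psi'.
Proof.
elim: al psi psi' => [|a al IH] psi psi' e /=; first exact: e.
by apply: IH; apply: eq_phead.
Qed.

Lemma pdual_sum (I : Type) (r : seq I) (P : pred I) (F : I -> seq nat -> rat) al :
  pdual al (fun b => \sum_(i <- r | P i) F i b) = \sum_(i <- r | P i) pdual al (F i).
Proof.
elim: al F => [|a al IH] F //=.
by rewrite -IH; apply: eq_pdual => b; apply: phead_sum.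
Qed.

Lemma pdualZ k psi al : pdual al (fun b => k * psi b) = k * pdual al psi.
Proof.
elim: al psi => [|a al IH] psi //=.
by rewrite -IH; apply: eq_pdual => b; apply: pheadZ.
Qed.

Lemma pdualB al psi1 psi2 :
  pdual al (fun b => psi1 b - psi2 b) = pdual al psi1 - pdual al psi2.
Proof.
transitivity (pdual al (fun b => \sum_(psi <- [:: psi1; fun b => -1 * psi2 b]) psi b)).
  by apply: eq_pdual => b; rewrite !big_cons big_nil addr0 mulN1r.
by rewrite pdual_sum !big_cons big_nil addr0 pdualZ mulN1r.
Qed.

Definition zero_on_long (s t : nat) (psi : seq nat -> rat) :=
  forall c, all (leq 1) c -> sumn c = s -> (t <= size c)%N -> psi c = 0.

Lemma zero_on_long_cons j s t psi : (0 < j)%N ->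
  zero_on_long (j + s) t psi -> zero_on_long s t.-1 (fun c => psi (j :: c)).
Proof. by move=> j0 Z c pc sc tc; apply: Z => /=; rewrite ?j0 ?sc //; lia. Qed.

Lemma alt_sum_zero_on_long m s t psi :
  zero_on_long (m + s) t psi -> zero_on_long s t (alt_sum m psi).
Proof.
elim/ltn_ind: m s t psi => -[|m] IH s t psi Z c pc sc tc; first exact: Z.
rewrite alt_sumS // big1 ?oppr0 // => j _.
have lt_jm := ltn_ord j.
apply: (IH (m.+1 - j.+1)%N _ s t.-1) => //; [lia | | lia].
apply: zero_on_long_cons => //.
by have <- : (m.+1 + s = j.+1 + (m.+1 - j.+1 + s))%N by lia.
Qed.

Lemma alt_sum_cons_zero_on_long (j m s t : nat) psi : (j < m)%N ->
  zero_on_long (m + s) t psi ->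
  zero_on_long s t.-1 (alt_sum (m - j.+1) (fun c => psi (j.+1 :: c))).
Proof.
move=> lt_jm Z; apply: alt_sum_zero_on_long; apply: zero_on_long_cons => //.
by have <- : (m + s = j.+1 + (m - j.+1 + s))%N by lia.
Qed.

Lemma alt_sum_zero_on_long_pred m s t psi : (0 < m)%N ->
  zero_on_long (m + s) t psi -> zero_on_long s t.-1 (alt_sum m psi).
Proof.
move=> m0 Z c pc sc tc; rewrite alt_sumS // big1 ?oppr0 // => j _.
exact: (alt_sum_cons_zero_on_long (ltn_ord j) Z).
Qed.

Lemma phead_zero_on_long a s t psi :
  zero_on_long (a + s) t psi -> zero_on_long s t.-1 (phead a psi).
Proof.
move=> Z c pc sc tc; rewrite /phead big1 // => j _.
by rewrite (alt_sum_cons_zero_on_long (ltn_ord j) Z) ?mulr0.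
Qed.

Lemma pdual_lead al psi : all (leq 1) al ->
  zero_on_long (sumn al) (size al).+1 psi ->
  pdual al psi = (\prod_(x <- al) x%:R) * psi al.
Proof.
elim: al psi => [|a al IH] psi /=; first by rewrite big_nil mul1r.
case/andP=> a0 pal Z; rewrite IH //; last exact: (phead_zero_on_long (t := (size al).+2) Z).
rewrite big_cons -mulrA mulrCA; congr (_ * _).
case: a a0 Z => [//|a] _ Z.
rewrite /phead big_ord_recr /= subnn alt_sum0 big1 ?add0r 1?mulrC // => j _.
have lt_ja := ltn_ord j.
have Zj : zero_on_long (a.+1 - j.+1 + sumn al) (size al).+1 (fun c => psi (j.+1 :: c)).
  apply: (zero_on_long_cons (t := (size al).+2)) => //.
  by have <- : (a.+1 + sumn al = j.+1 + (a.+1 - j.+1 + sumn al))%N by lia.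
by rewrite (alt_sum_zero_on_long_pred _ Zj) ?mulr0 //; lia.
Qed.

Lemma sum_ord_fibers (R : nmodType) (I : finType) M (P : pred I) (g : I -> nat)
    (F : nat -> I -> R) :
  \sum_(j < M) \sum_(i | P i && (g i == j.+1)) F j.+1 i =
  \sum_(i | P i && (0 < g i <= M)%N) F (g i) i.
Proof.
under eq_bigr do rewrite big_mkcondr.
rewrite exchange_big [RHS]big_mkcondr; apply: eq_bigr => i _.
case: ifP => [/andP[gi0 giM]|/negbT giM].
  have lt_gM : ((g i).-1 < M)%N by lia.
  rewrite (bigD1 (Ordinal lt_gM)) //= prednK // eqxx big1 ?addr0 // => j nj.
  by case: eqP => // e; case/eqP: nj; apply: val_inj; rewrite /= e.
by apply: big1 => j _; case: eqP => // e; move: giM; rewrite e ltn_ord.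
Qed.

(** * Chains of upsets in a weighted poset *)

Section WeightedUpsets.
Variables (T : finType) (lt : rel T).

Definition upset (A U : {set T}) : bool :=
  (U \subset A) && [forall x in U, forall y in A, lt x y ==> (y \in U)].

Lemma upsetP (A U : {set T}) :
  reflect (U \subset A /\ {in U & A, forall x y, lt x y -> y \in U}) (upset A U).
Proof.
apply: (iffP andP) => -[sUA upU]; split=> //.
  by move=> x y xU yA; move/forall_inP/(_ x xU)/forall_inP/(_ y yA)/implyP: upU.
by apply/forall_inP=> x xU; apply/forall_inP=> y yA; apply/implyP; apply: upU.
Qed.

Lemma upset_sub (A U : {set T}) : upset A U -> U \subset A.
Proof. by case/upsetP. Qed.

Lemma upset_refl (A : {set T}) : upset A A.
Proof. by apply/upsetP; split. Qed.

Lemma upset_trans (A V U : {set T}) : upset A V -> upset V U -> upset A U.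
Proof.
move=> /upsetP[/subsetP sVA upV] /upsetP[sUV upU]; apply/upsetP; split.
  exact: subset_trans sUV (introT subsetP sVA).
by move=> x y xU yA lxy; apply: upU xU (upV _ _ (subsetP sUV x xU) yA lxy) lxy.
Qed.

Lemma upsetD (A V U : {set T}) : upset A V -> upset V U -> upset (A :\: U) (V :\: U).
Proof.
move=> /upsetP[sVA upV] /upsetP[_ upU]; apply/upsetP; split; first exact: setSD.
move=> x y; rewrite !inE => /andP[_ xV] /andP[yU yA] lxy.
by rewrite yU (upV x y).
Qed.

Lemma upsetU (A U V : {set T}) : upset A U -> upset (A :\: U) V -> upset A (U :|: V).
Proof.
move=> /upsetP[sUA upU] /upsetP[sV upV]; apply/upsetP; split.
  by rewrite subUset sUA (subset_trans sV) ?subsetDl.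
move=> x y; rewrite !inE => /orP[xU|xV] yA lxy; first by rewrite (upU x y).
by case: (boolP (y \in U)) => //= yU; rewrite (upV x y) // inE yU.
Qed.

Lemma upsetUl (A U V : {set T}) : upset A U -> upset (A :\: U) V -> upset (U :|: V) U.
Proof.
move=> /upsetP[sUA upU] /upsetP[sV _]; apply/upsetP; split; first exact: subsetUl.
move=> x y xU; rewrite inE => /orP[yU|yV]; first by [].
by apply: upU; rewrite // (subsetP (subset_trans sV (subsetDl A U))).
Qed.

Lemma setUDKl (A U V : {set T}) : V \subset A :\: U -> (U :|: V) :\: U = V.
Proof.
move=> /subsetP sV; apply/setP=> x; rewrite !inE.
case: (boolP (x \in V)) => xV; last by rewrite orbF andNb.
by rewrite orbT andbT; move: (sV x xV); rewrite inE => /andP[].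
Qed.

Lemma big_upset_nested (R : nmodType) (A : {set T}) (Q : pred {set T})
    (F : {set T} -> {set T} -> R) :
  \sum_(V | upset A V && Q V) \sum_(U | upset V U) F V U =
  \sum_(U | upset A U) \sum_(V | upset (A :\: U) V && Q (U :|: V)) F (U :|: V) U.
Proof.
rewrite (exchange_big_dep (upset A)) /=; last first.
  by move=> V U /andP[uAV _]; apply: upset_trans.
apply: eq_bigr => U uAU.
rewrite (reindex_onto (fun V => U :|: V) (fun V => V :\: U)) /=; last first.
  move=> V /andP[_ /upset_sub/subsetP sUV]; apply/setP=> x; rewrite !inE.
  by case: (boolP (x \in U)) => [/sUV|].
apply: eq_bigl => V; apply/idP/idP.
  move=> /andP[/andP[/andP[uAUV ->] uUVU] /eqP <-].
  by rewrite andbT upsetD.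
move=> /andP[uV ->].
by rewrite upsetU ?(upsetUl uAU uV) ?(setUDKl (upset_sub uV)) ?eqxx.
Qed.

Variable wt : T -> nat.

Definition weight (A : {set T}) : nat := \sum_(x in A) wt x.

Lemma weightD (A U : {set T}) : U \subset A -> weight A = (weight U + weight (A :\: U))%N.
Proof. by move=> sUA; rewrite /weight (big_setID U) /= (setIidPr sUA). Qed.

(* [upchains a A] counts the chains [A = U_0 >= U_1 >= ... >= U_n = set0] of
   upsets with [weight (U_(i-1) :\: U_i) = a_i], i.e. the weighted
   P-partitions of [A] with content [a]. *)
Fixpoint upchains (a : seq nat) (A : {set T}) : nat :=
  if a is k :: a' then \sum_(U | upset A U && (weight (A :\: U) == k)) upchains a' U
  else A == set0.

Definition upchainsr (A : {set T}) (b : seq nat) : rat := (upchains b A)%:R.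

Lemma upchainsr_cons (A : {set T}) k b :
  upchainsr A (k :: b) = \sum_(U | upset A U && (weight (A :\: U) == k)) upchainsr U b.
Proof. by rewrite /upchainsr natr_sum. Qed.

Lemma upchains_cat (c b : seq nat) (A : {set T}) :
  upchains (c ++ b) A = (\sum_(U | upset A U) upchains c (A :\: U) * upchains b U)%N.
Proof.
elim: c A => [|k c IH] A /=.
  rewrite (bigD1 A) ?upset_refl //= setDv eqxx mul1n big1 ?addn0 // => U.
  case/andP=> /upset_sub sUA nUA; suff /negPf-> : A :\: U != set0 by [].
  by apply: contra nUA; rewrite setD_eq0 eqEsubset sUA.
under eq_bigr do rewrite IH.
rewrite big_upset_nested; apply: eq_bigr => U _; rewrite big_distrl /=.
apply: eq_big => [V|V /andP[/upset_sub sV _]]; first by rewrite setDDl.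
by rewrite (setUDKl sV).
Qed.

Lemma phead_upchains a (A : {set T}) b :
  phead a (upchainsr A) b =
  \sum_(U | upset A U) phead a (upchainsr (A :\: U)) [::] * upchainsr U b.
Proof.
rewrite phead_cat (@eq_phead a _ (fun c =>
  \sum_(U | upset A U) upchainsr U b * upchainsr (A :\: U) c)); last first.
  move=> c; rewrite /upchainsr upchains_cat natr_sum.
  by apply: eq_bigr => U _; rewrite natrM mulrC.
by rewrite phead_sum; apply: eq_bigr => U _; rewrite pheadZ mulrC.
Qed.

Lemma pdual_upchains_cons a al (A : {set T}) :
  pdual (a :: al) (upchainsr A) =
  \sum_(U | upset A U) phead a (upchainsr (A :\: U)) [::] * pdual al (upchainsr U).
Proof.
rewrite /= (eq_pdual _ (phead_upchains a A)).
rewrite (pdual_sum _ _ (fun U b => phead a (upchainsr (A :\: U)) [::] * upchainsr U b)).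
by apply: eq_bigr => U _; rewrite pdualZ.
Qed.

Lemma alt_sum_upchains_cons m j (A : {set T}) b :
  alt_sum m (fun c => upchainsr A (j :: c)) b =
  \sum_(U | upset A U && (weight (A :\: U) == j)) alt_sum m (upchainsr U) b.
Proof. by rewrite (eq_alt_sum _ (fun c => upchainsr_cons A j c)) alt_sum_sum. Qed.

Lemma big_alt_sum_upchains M (f : nat -> rat) (A : {set T}) :
  \sum_(j < M) f j.+1 * alt_sum (M - j.+1) (fun c => upchainsr A (j.+1 :: c)) [::] =
  \sum_(U | upset A U && (0 < weight (A :\: U) <= M)%N)
     f (weight (A :\: U)) * alt_sum (M - weight (A :\: U)) (upchainsr U) [::].
Proof.
under eq_bigr do rewrite alt_sum_upchains_cons mulr_sumr.
exact: (sum_ord_fibers M (upset A) (fun U => weight (A :\: U))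
          (fun k U => f k * alt_sum (M - k) (upchainsr U) [::])).
Qed.

Hypothesis wt_gt0 : forall x, (0 < wt x)%N.

Lemma weight_eq0 (A : {set T}) : (weight A == 0)%N = (A == set0).
Proof.
rewrite /weight sum_nat_eq0; apply/forall_inP/eqP => [w0|-> x]; last by rewrite inE.
apply/setP=> x; rewrite inE; apply/negP => xA.
by move: (w0 x xA) (wt_gt0 x) => /eqP->.
Qed.

Lemma upset_weight_gt0 (A U : {set T}) :
  upset A U -> (0 < weight (A :\: U))%N = (U != A).
Proof.
by move=> /upset_sub sUA; rewrite lt0n weight_eq0 setD_eq0 eqEsubset sUA.
Qed.

Lemma alt_sum_upchains_nil_eq0 m (A : {set T}) :
  m != weight A -> alt_sum m (upchainsr A) [::] = 0.
Proof.
elim/ltn_ind: m A => -[|m] IH A hm.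
  by rewrite alt_sum0 /upchainsr /= -weight_eq0 eq_sym (negPf hm).
rewrite alt_sumS // big1 ?oppr0 // => j _.
rewrite alt_sum_upchains_cons big1 // => U /andP[/upset_sub sUA /eqP wAU].
apply: IH; first lia.
by move: hm; rewrite (weightD sUA) wAU; apply: contra => /eqP <-; have := ltn_ord j; lia.
Qed.

Lemma upset0 (A : {set T}) : upset A set0.
Proof. by apply/upsetP; split=> [|x y]; rewrite ?sub0set ?inE. Qed.

Lemma upchains1 k (A : {set T}) : upchains [:: k] A = (weight A == k).
Proof.
rewrite /= big_mkcond (bigD1 set0) //= upset0 setD0 eqxx big1 ?addn0; first by case: eqP.
by move=> U /negPf nU; rewrite nU if_same.
Qed.

Lemma upchains2 x y (A : {set T}) :
  upchains [:: x; y] A =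
  (\sum_(U | upset A U && (weight (A :\: U) == x) && (weight U == y)) 1)%N.
Proof.
rewrite [RHS]big_mkcondr; apply: eq_bigr => U _.
by have /= -> := upchains1 y U; case: eqP.
Qed.

Lemma upchains_rcons0 a (A : {set T}) : upchains (rcons a 0) A = upchains a A.
Proof.
rewrite -cats1 upchains_cat (bigD1 set0) ?upset0 // setD0 upchains1 /weight big_set0.
rewrite big1 => [|U /andP[_ nU]]; first by rewrite muln1 /= addn0.
by rewrite upchains1 weight_eq0 (negPf nU) muln0.
Qed.

(* The Moebius function of the lattice of upsets, between [A] and [set0]. *)
Definition upset_mobius (A : {set T}) : rat := alt_sum (weight A) (upchainsr A) [::].

Lemma sum_upset_mobius (A : {set T}) :
  \sum_(U | upset A U) upset_mobius U = (A == set0)%:R.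
Proof.
have [->|nA] := eqVneq A set0.
  rewrite (bigD1 set0) ?upset_refl //= big1 ?addr0.
    by rewrite /upset_mobius /weight big_set0 alt_sum0 /upchainsr /= eqxx.
  by move=> U /andP[/upset_sub]; rewrite subset0 => ->.
have wA : (0 < weight A)%N by rewrite lt0n weight_eq0.
rewrite (bigD1 A) ?upset_refl //= {1}/upset_mobius alt_sumS //.
under [X in - X]eq_bigr do rewrite -[alt_sum _ _ _]mul1r.
rewrite (big_alt_sum_upchains _ (fun=> 1)) addrC; apply/eqP; rewrite subr_eq0; apply/eqP.
apply: eq_big => [U|U /andP[/upset_sub sUA _]]; last first.
  by rewrite mul1r /upset_mobius {1}(weightD sUA) addnK.
case uAU: (upset A U) => //=.
by rewrite upset_weight_gt0 // (weightD (upset_sub uAU)) leq_addl andbT.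
Qed.

Hypothesis lt_trans : transitive lt.

Definition not_below (A : {set T}) (x : T) : {set T} :=
  [set y in A | (y != x) && ~~ lt y x].

Lemma upset_not_below (A U : {set T}) x : x \in A ->
  (upset A U && (x \notin U)) = upset (not_below A x) U.
Proof.
move=> xA; apply/idP/upsetP => [/andP[/upsetP[/subsetP sUA upU] xU]|[sU upU]].
  split=> [|y z yU]; last by rewrite inE => /andP[zA _]; apply: upU.
  apply/subsetP=> y yU; rewrite inE sUA //=; apply/andP; split.
    by apply: contraNneq xU => <-.
  by apply: contraNN xU => lyx; apply: upU yU xA lyx.
have sUA : U \subset A by apply: subset_trans sU _; apply/subsetP=> y /setIdP[].
apply/andP; split; last by apply/negP=> /(subsetP sU); rewrite !inE eqxx /= andbF.
apply/upsetP; split=> // y z yU zA lyz; apply: (upU y z yU _ lyz).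
move: (subsetP sU y yU); rewrite !inE zA => /and3P[_ nyx nlyx] /=.
apply/andP; split; first by apply: contraNneq nlyx => <-.
by apply: contraNN nlyx => lzx; apply: lt_trans lyz lzx.
Qed.

(* [not_below A x == set0] says that [x] is the greatest element of [A]. *)
Lemma phead_upchains_nil a (A : {set T}) :
  phead a (upchainsr A) [::] =
  (a == weight A)%:R * \sum_(x in A) (wt x)%:R * (not_below A x == set0)%:R.
Proof.
rewrite /phead (big_alt_sum_upchains a (fun k => k%:R) A).
have [->|na] := eqVneq a (weight A); last first.
  rewrite mul0r big1 // => U /andP[/upset_sub sUA /andP[_ hle]].
  rewrite alt_sum_upchains_nil_eq0 ?mulr0 //.
  by move: na; rewrite (weightD sUA); apply: contra => /eqP; lia.
rewrite mul1r.
transitivity (\sum_(U | upset A U) (weight (A :\: U))%:R * upset_mobius U).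
  rewrite big_mkcondr; apply: eq_bigr => U /upset_sub sUA.
  have wAU : weight A = (weight U + weight (A :\: U))%N by apply: weightD.
  have -> : (weight A - weight (A :\: U) = weight U)%N by rewrite wAU addnK.
  rewrite wAU leq_addl andbT /upset_mobius.
  by case: posnP => [->|//]; rewrite mul0r.
transitivity (\sum_(U | upset A U) \sum_(x in A | x \notin U) (wt x)%:R * upset_mobius U).
  apply: eq_bigr => U _; rewrite -mulr_suml -natr_sum /weight.
  by congr (_%:R * _); apply: eq_bigl => x; rewrite inE andbC.
rewrite (exchange_big_dep (mem A)) /=; last by move=> U x _ /andP[].
apply: eq_bigr => x xA; rewrite -mulr_sumr -sum_upset_mobius; congr (_ * _).
by apply: eq_bigl => U; rewrite -upset_not_below // xA.
Qed.

Lemma phead_upchains_nil_ge0 a (A : {set T}) : 0 <= phead a (upchainsr A) [::].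
Proof.
by rewrite phead_upchains_nil mulr_ge0 ?sumr_ge0 // => x _; rewrite mulr_ge0.
Qed.

Lemma pdual_upchains_ge0 al (A : {set T}) : 0 <= pdual al (upchainsr A).
Proof.
elim: al A => [|a al IH] A; first exact: ler0n.
by rewrite pdual_upchains_cons sumr_ge0 // => U _; rewrite mulr_ge0 ?phead_upchains_nil_ge0.
Qed.

Lemma pdual_upchains_eq0 al (A : {set T}) :
  sumn al != weight A -> pdual al (upchainsr A) = 0.
Proof.
elim: al A => [|a al IH] A hA.
  by move: hA; rewrite /upchainsr /= -weight_eq0 eq_sym => /negPf->.
rewrite pdual_upchains_cons big1 // => U /upset_sub sUA.
rewrite phead_upchains_nil; have [ea|] := eqVneq a (weight (A :\: U)); last first.
  by rewrite !mul0r.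
by rewrite IH ?mulr0 //; apply: contra hA => /eqP /= e; rewrite (weightD sUA) ea e addnC.
Qed.

End WeightedUpsets.

(** * P-partitions *)

Section PPartitions.
Variables (T : finType) (lt : rel T) (wt : T -> nat).
Local Notation upset := (upset lt).
Local Notation weight := (weight wt).

Definition ole n (o1 o2 : option 'I_n) : bool :=
  if o1 is Some i then if o2 is Some j then (i <= j)%N else true else true.

Definition is_ppart_on (a : seq nat) (A : {set T}) (f : {ffun T -> option 'I_(size a)}) :=
  [&& [forall x, (x \in A) == (f x != None)],
      [forall x, forall y, lt x y ==> ole (f x) (f y)] &
      [forall i, (\sum_(x | f x == Some i) wt x)%N == nth 0%N a i]].
Arguments is_ppart_on : clear implicits.

Lemma is_ppart_onP a (A : {set T}) (f : {ffun T -> option 'I_(size a)}) :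
  reflect [/\ forall x, (x \in A) = (f x != None),
              forall x y, lt x y -> ole (f x) (f y) &
              forall i, (\sum_(x | f x == Some i) wt x)%N = nth 0%N a i]
          (is_ppart_on a A f).
Proof.
apply: (iffP and3P) => -[supp mono cont]; split.
- by move=> x; apply/eqP; move/forallP: supp.
- by move=> x y; move/forallP/(_ x)/forallP/(_ y)/implyP: mono.
- by move=> i; apply/eqP; move/forallP: cont.
- by apply/forallP=> x; rewrite supp.
- by apply/forallP=> x; apply/forallP=> y; apply/implyP; apply: mono.
- by apply/forallP=> i; rewrite cont.
Qed.

Definition ppart_on (a : seq nat) (A : {set T}) : nat := #|[set f | is_ppart_on a A f]|.

Lemma ppart_on_nil (A : {set T}) : ppart_on [::] A = (A == set0).
Proof.
have [->|[x xA]] := set_0Vmem A.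
  apply/eqP; rewrite eqxx /ppart_on eqn_leq card_gt0; apply/andP; split.
    by rewrite (leq_trans (max_card _)) // card_ffun card_option card_ord exp1n.
  apply/set0Pn; exists [ffun=> None]; rewrite inE; apply/is_ppart_onP.
  by split=> [y|y z|[]]; rewrite ?inE ?ffunE.
have /negPf-> : A != set0 by apply/set0Pn; exists x.
apply/eqP; rewrite cards_eq0; apply/eqP/setP=> f; rewrite !inE.
apply/negP=> /is_ppart_onP[supp _ _]; move: (supp x); rewrite xA.
by case: (f x) => [[]|].
Qed.

Section Cons.
Variable n : nat.

(* A P-partition into [n.+1] levels splits into its bottom level and a
   P-partition of the remaining upset into [n] levels. *)
Definition ptail (f : {ffun T -> option 'I_n.+1}) : {ffun T -> option 'I_n} :=
  [ffun x => obind (unlift ord0) (f x)].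

Definition pupper (f : {ffun T -> option 'I_n.+1}) : {set T} :=
  [set x | ptail f x != None].

Definition pcons (A U : {set T}) (g : {ffun T -> option 'I_n}) :
    {ffun T -> option 'I_n.+1} :=
  [ffun x => if x \in A :\: U then Some ord0 else omap (lift ord0) (g x)].

Lemma ptail_some f x i : (ptail f x == Some i) = (f x == Some (lift ord0 i)).
Proof.
rewrite ffunE; case: (f x) => [j|] //=; case: unliftP => [j' ->|->] /=.
  by rewrite !(inj_eq Some_inj) (inj_eq (@lift_inj _ ord0)).
by apply/esym/negbTE; rewrite (inj_eq Some_inj) neq_lift.
Qed.

Lemma mem_pupper f x : (x \in pupper f) = if f x is Some j then (0 < j)%N else false.
Proof.
rewrite inE ffunE; case: (f x) => [j|] //=.
by case: unliftP => [j' ->|->].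
Qed.

Lemma ole_ptail (f : {ffun T -> option 'I_n.+1}) x y :
  ole (f x) (f y) -> ole (ptail f x) (ptail f y).
Proof.
rewrite !ffunE; case: (f x) => [i|] //; case: (f y) => [j|] /=; last by case: unliftP.
by case: unliftP => [i' ->|->] //; case: unliftP => [j' ->|->] //=; rewrite !lift0.
Qed.

Lemma ole_omap_lift (o1 o2 : option 'I_n) :
  ole (omap (lift ord0) o1) (omap (lift ord0) o2) = ole o1 o2.
Proof. by case: o1 => [i|] //; case: o2 => [j|] //=; rewrite !lift0. Qed.

Lemma ptail_pcons (A U : {set T}) (g : {ffun T -> option 'I_n}) :
  {in [predC U], forall x, g x = None} -> ptail (pcons A U g) = g.
Proof.
move=> gU; apply/ffunP=> x; rewrite !ffunE.
case: ifP => [/setDP[_ xU]|_]; first by rewrite /= unlift_none gU // inE.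
by case: (g x) => [j|] //=; rewrite liftK.
Qed.

Lemma pcons_ptail (A : {set T}) (f : {ffun T -> option 'I_n.+1}) :
  (forall x, (x \in A) = (f x != None)) -> pcons A (pupper f) (ptail f) = f.
Proof.
move=> supp; apply/ffunP=> x; rewrite !ffunE inE mem_pupper supp.
by case: (f x) => [j|] //=; case: unliftP => [j' ->|->].
Qed.

End Cons.
Arguments ptail {n}.
Arguments pupper {n}.
Arguments pcons {n}.

Lemma is_ppart_on_upper k a (A : {set T}) (f : {ffun T -> option 'I_(size a).+1}) :
  is_ppart_on (k :: a) A f -> upset A (pupper f) && (weight (A :\: pupper f) == k).
Proof.
move=> /is_ppart_onP[supp mono cont]; apply/andP; split.
  apply/upsetP; split=> [|x y].
    by apply/subsetP=> x; rewrite mem_pupper supp; case: (f x).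
  rewrite !mem_pupper supp => xU yA /mono; move: xU yA.
  by case: (f x) => [i|] //; case: (f y) => [j|] //= i0 _ /(leq_trans i0).
apply/eqP; have /= <- := cont ord0; apply: eq_bigl => x.
rewrite in_setD mem_pupper supp; case: (f x) => [j|] //=.
by rewrite andbT (inj_eq Some_inj) -val_eqE /= -eqn0Ngt.
Qed.

Lemma is_ppart_on_ptail k a (A : {set T}) (f : {ffun T -> option 'I_(size a).+1}) :
  is_ppart_on (k :: a) A f -> is_ppart_on a (pupper f) (ptail f).
Proof.
move=> /is_ppart_onP[supp mono cont]; apply/is_ppart_onP; split.
- by move=> x; rewrite inE.
- by move=> x y /mono; apply: ole_ptail.
- by move=> i; under eq_bigl do rewrite ptail_some; rewrite cont lift0.
Qed.

Lemma is_ppart_on_pcons k a (A U : {set T}) (g : {ffun T -> option 'I_(size a)}) :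
  upset A U -> weight (A :\: U) = k -> is_ppart_on a U g ->
  is_ppart_on (k :: a) A (pcons A U g).
Proof.
move=> /upsetP[/subsetP sUA upU] wAU /is_ppart_onP[supp mono cont].
have gU : {in [predC U], forall x, g x = None}.
  by move=> x; rewrite inE supp negbK => /eqP.
have suppA x : (x \in A) = (pcons A U g x != None).
  rewrite ffunE inE; case: (boolP (x \in U)) => xU /=.
    by rewrite sUA //; move: (supp x); rewrite xU; case: (g x).
  by rewrite gU ?inE //; case: (x \in A).
apply/is_ppart_onP; split=> // [x y lxy|i].
  rewrite !ffunE !inE; case: (boolP (x \in U)) => xU /=; last first.
    by case: (x \in A); [case: (if _ then _ else _) | rewrite gU ?inE].
  case: (boolP (y \in A)) => yA; last by rewrite andbF ole_omap_lift mono.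
  by rewrite (upU x y xU yA lxy) /= ole_omap_lift mono.
case: (unliftP ord0 i) => [i' ->|->] /=.
  by under eq_bigl do rewrite -ptail_some ptail_pcons //; rewrite cont.
rewrite -wAU /weight; apply: eq_bigl => x; rewrite ffunE.
by case: ifP => // _; case: (g x).
Qed.

Lemma ppart_on_cons k a (A : {set T}) :
  ppart_on (k :: a) A =
  (\sum_(U | upset A U && (weight (A :\: U) == k)) ppart_on a U)%N.
Proof.
rewrite /ppart_on -sum1_card.
rewrite (partition_big pupper (fun U => upset A U && (weight (A :\: U) == k))) /=;
  last by move=> f; rewrite inE => /is_ppart_on_upper.
apply: eq_bigr => U /andP[uAU /eqP wAU].
have gU (g : {ffun T -> option 'I_(size a)}) :
    is_ppart_on a U g -> {in [predC U], forall x, g x = None}.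
  by move=> /is_ppart_onP[supp _ _] x; rewrite inE supp negbK => /eqP.
transitivity #|pcons A U @: [set g | is_ppart_on a U g]|; last first.
  rewrite card_in_imset // => g1 g2; rewrite !inE => /gU g1U /gU g2U.
  by move/(congr1 ptail); rewrite !ptail_pcons.
rewrite sum1_card; apply: eq_card => f; rewrite unfold_in !inE.
apply/andP/imsetP => [[fP /eqP <-]|[g gP ->]].
  exists (ptail f); first by rewrite inE (is_ppart_on_ptail fP).
  by case/is_ppart_onP: fP => supp _ _; rewrite pcons_ptail.
move: gP; rewrite inE => gP; split; first exact: is_ppart_on_pcons.
apply/eqP/setP=> x; rewrite inE (ptail_pcons _ (gU _ gP)).
by case/is_ppart_onP: gP => supp _ _; rewrite supp.
Qed.

Lemma ppart_on_upchains a (A : {set T}) : ppart_on a A = upchains lt wt a A.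
Proof.
elim: a A => [|k a IH] A; first exact: ppart_on_nil.
by rewrite ppart_on_cons; apply: eq_bigr => U _; apply: IH.
Qed.

Definition is_ppart (a : seq nat) (f : {ffun T -> 'I_(size a)}) :=
  [forall x, forall y, lt x y ==> (f x <= f y)%N] &&
  [forall i, (\sum_(x | f x == i) wt x)%N == nth 0%N a i].
Arguments is_ppart : clear implicits.

Definition ppart (a : seq nat) : nat := #|[set f | is_ppart a f]|.

Lemma ppart_upchains a : ppart a = upchains lt wt a setT.
Proof.
rewrite -ppart_on_upchains /ppart /ppart_on.
pose some (f : {ffun T -> 'I_(size a)}) := [ffun x => Some (f x)].
have some_inj : injective some.
  by move=> f1 f2 /ffunP e; apply/ffunP=> x; move: (e x); rewrite !ffunE => -[].
rewrite -(card_imset _ some_inj); apply: eq_card => g; rewrite [in RHS]inE.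
apply/imsetP/is_ppart_onP => [[f]|[supp mono cont]].
  rewrite inE => /andP[/forallP mono /forallP cont] ->.
  split=> [x|x y lxy|i]; rewrite ?inE ?ffunE //.
    by move/forallP/(_ y)/implyP: (mono x); apply.
  by rewrite -(eqP (cont i)); apply: eq_bigl => x; rewrite ffunE (inj_eq Some_inj).
have gS x : {i | g x = Some i}.
  by move: (supp x); rewrite inE; case: (g x) => [i|]; [exists i|].
exists [ffun x => sval (gS x)]; last first.
  by apply/ffunP=> x; rewrite !ffunE; case: (gS x) => i /= ->.
rewrite inE; apply/andP; split.
  apply/forallP=> x; apply/forallP=> y; apply/implyP=> /mono.
  by rewrite !ffunE; case: (gS x) => i /= ->; case: (gS y) => j /= ->.
apply/forallP=> i; rewrite -cont; apply/eqP/eq_bigl=> x.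
by rewrite ffunE; case: (gS x) => j /= ->; rewrite (inj_eq Some_inj).
Qed.

End PPartitions.

(** * Antichains *)

Definition antichain (T : Type) : rel T := fun _ _ => false.

Lemma antichain_trans (T : Type) : transitive (@antichain T).
Proof. by []. Qed.

Lemma count_content_cons (T : finType) (wt : T -> nat) a al (A : {set T}) :
  (forall v, count_mem v (a :: al) = #|[set y in A | wt y == v]|) <->
  exists2 x, (x \in A) && (wt x == a) &
    forall v, count_mem v al = #|[set y in A :\ x | wt y == v]|.
Proof.
have cardD1 x v : x \in A ->
    #|[set y in A | wt y == v]| = ((wt x == v) + #|[set y in A :\ x | wt y == v]|)%N.
  move=> xA; rewrite (cardsD1 x) !inE xA; congr (_ + _)%N.
  by apply: eq_card => y; rewrite !inE andbA.
split=> [cnt|[x /andP[xA /eqP <-] cnt] v]; last by rewrite /= cnt (cardD1 x).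
have : (0 < count_mem a (a :: al))%N by rewrite /= eqxx.
rewrite cnt card_gt0 => /set0Pn[x]; rewrite inE => /andP[xA wxa].
exists x => [|v]; first by rewrite xA.
by move: (cnt v); rewrite /= (cardD1 x) // (eqP wxa) => /addnI.
Qed.

Section Antichain.
Variables (T : finType) (wt : T -> nat).
Local Notation upset := (upset (@antichain T)).
Local Notation upchains := (upchains (@antichain T) wt).
Local Notation upchainsr := (upchainsr (@antichain T) wt).
Local Notation weight := (weight wt).

Lemma upset_antichain (A U : {set T}) : upset A U = (U \subset A).
Proof. by apply/upsetP/idP => [[]//|sUA]; split. Qed.

Lemma upchains_antichain_swap x y r (A : {set T}) :
  upchains [:: x, y & r] A = upchains [:: y, x & r] A.
Proof.
have cat2 u v : [:: u, v & r] = [:: u; v] ++ r by [].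
rewrite (cat2 x y) (cat2 y x) !upchains_cat.
apply: eq_bigr => W _; congr (_ * _)%N; rewrite !upchains2.
set B := A :\: W; rewrite (reindex_onto (fun V => B :\: V) (fun V => B :\: V)) /=.
  apply: eq_bigl => V; rewrite !upset_antichain subsetDl /=.
  case: (boolP (V \subset B)) => sVB /=.
    by rewrite setDDr setDv set0U (setIidPr sVB) eqxx andbT andbC.
  apply/negbTE; apply: contra sVB => /andP[_ /eqP <-]; exact: subsetDl.
move=> V /andP[/andP]; rewrite upset_antichain => -[sVB _] _.
by rewrite setDDr setDv set0U (setIidPr sVB).
Qed.

Lemma upchains_antichain_perm a b (A : {set T}) :
  perm_eq a b -> upchains a A = upchains b A.
Proof.
have front x b1 b2 B : upchains (x :: b1 ++ b2) B = upchains (b1 ++ x :: b2) B.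
  elim: b1 B => [|y b1 IH] B //=.
  rewrite -/(upchains [:: x, y & b1 ++ b2] B) upchains_antichain_swap /=.
  by apply: eq_bigr => U _; apply: IH.
elim: a b A => [|x a IH] b A hp; first by move: (perm_size hp); case: b {hp}.
have xb : x \in b by rewrite -(perm_mem hp) mem_head.
case/splitPr: xb hp => b1 b2 hp; rewrite -front /=; apply: eq_bigr => U _; apply: IH.
by rewrite -(perm_cons x) (perm_trans hp) // (perm_catCA b1 [:: x] b2).
Qed.

Hypothesis wt_gt0 : forall x, (0 < wt x)%N.

Lemma phead_antichain_neq0 a (D : {set T}) :
  (phead a (upchainsr D) [::] != 0) = [exists x, (D == [set x]) && (wt x == a)].
Proof.
rewrite (phead_upchains_nil wt_gt0 (@antichain_trans T)).
have nb (B : {set T}) x : not_below (@antichain T) B x = B :\ x.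
  by apply/setP=> y; rewrite !inE andbT andbC.
apply/idP/existsP => [|[x /andP[/eqP-> /eqP<-]]]; last first.
  rewrite /weight !big_set1 eqxx mul1r nb setDv eqxx mulr1.
  by rewrite pnatr_eq0 -lt0n wt_gt0.
rewrite mulf_eq0 negb_or => /andP[wD /eqP].
case/(psumr_neq0P (fun x _ => mulr_ge0 (ler0n _ _) (ler0n _ _))) => x.
have wx0 : (0 : rat) < (wt x)%:R by rewrite ltr0n.
rewrite nb => /andP[xD]; rewrite pmulr_rgt0 // ltr0n lt0b => /eqP Dx0.
have Dx : D = [set x] by rewrite -(setD1K xD) Dx0 setU0.
exists x; rewrite Dx eqxx /=.
by move: wD; rewrite Dx /weight big_set1 pnatr_eq0 eqb0 negbK eq_sym.
Qed.

Lemma pdual_antichain_cons_neq0 a al (A : {set T}) :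
  pdual (a :: al) (upchainsr A) != 0 <->
  exists2 x, (x \in A) && (wt x == a) & pdual al (upchainsr (A :\ x)) != 0.
Proof.
have ge0 U : 0 <= phead a (upchainsr (A :\: U)) [::] * pdual al (upchainsr U).
  by rewrite mulr_ge0 ?phead_upchains_nil_ge0 ?pdual_upchains_ge0 //;
    apply: antichain_trans.
have AD1 x : x \in A -> A :\: (A :\ x) = [set x].
  by move=> xA; rewrite setDDr setDv set0U; apply/setIidPr; rewrite sub1set.
rewrite pdual_upchains_cons; split.
  move=> /eqP/(psumr_neq0P (fun U _ => ge0 U))[U /andP[/upset_sub sUA]].
  rewrite lt_def mulf_eq0 negb_or => /andP[/andP[+ pU] _].
  rewrite phead_antichain_neq0 => /existsP[x /andP[/eqP AUx wx]].
  have xA : x \in A by move: (set11 x); rewrite -AUx => /setDP[].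
  exists x; first by rewrite xA.
  by rewrite -AUx setDDr setDv set0U (setIidPr sUA).
move=> [x /andP[xA wx] px]; apply/eqP=> sum0.
have := psumr_eq0P (fun U _ => ge0 U) sum0 (i := A :\ x).
rewrite upset_antichain subD1set AD1 // => /(_ isT)/eqP.
rewrite mulf_eq0 (negPf px) orbF.
by apply/negP; rewrite phead_antichain_neq0; apply/existsP; exists x; rewrite eqxx.
Qed.

Lemma pdual_antichain_neq0 al (A : {set T}) :
  pdual al (upchainsr A) != 0 <-> forall v, count_mem v al = #|[set x in A | wt x == v]|.
Proof.
elim: al A => [|a al IH] A.
  rewrite /= /upchainsr pnatr_eq0 eqb0 negbK; split=> [/eqP-> v|cnt].
    by apply/esym/eqP; rewrite cards_eq0; apply/eqP/setP=> x; rewrite !inE.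
  apply/eqP/setP=> x; rewrite inE; apply/negP=> xA.
  by move: (cnt (wt x)); rewrite /= (cardsD1 x) !inE xA eqxx.
rewrite pdual_antichain_cons_neq0 count_content_cons.
by split=> -[x xA /IH hx]; exists x.
Qed.
End Antichain.

(** * p-positivity *)

Lemma Kcoef_upchains d (P : finPOrderType d) a :
  Kcoef P a = upchains (fun x y : P => (x < y)%O) (fun=> 1%N) a setT.
Proof.
rewrite -ppart_upchains /Kcoef /ppart; apply: eq_card => f; rewrite !inE.
by congr (_ && _); apply: eq_forallb => i; rewrite sum1dep_card.
Qed.

Lemma Pcoef_upchains l a :
  Pcoef l a = upchains (@antichain 'I_(size l)) (fun j => nth 0%N l j) a setT.
Proof.
rewrite -ppart_upchains /Pcoef /ppart; apply: eq_card => g; rewrite !inE.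
rewrite /is_ppart [X in _ = X && _](_ : _ = true) //.
by apply/forallP=> x; apply/forallP.
Qed.

Lemma partition_nth_gt0 l : is_partition l -> forall j : 'I_(size l), (0 < nth 0%N l j)%N.
Proof. by case/andP=> _ /all_nthP pl j; apply: pl. Qed.

Lemma count_mem_card (s : seq nat) v :
  count_mem v s = #|[set j : 'I_(size s) | nth 0%N s j == v]|.
Proof. by rewrite -sum1_count (big_nth 0%N) big_mkord sum1dep_card. Qed.

Lemma Pcoef_perm l a b : perm_eq a b -> Pcoef l a = Pcoef l b.
Proof. by move=> ab; rewrite !Pcoef_upchains (upchains_antichain_perm _ _ ab). Qed.

Lemma Pcoef_rcons0 l a : is_partition l -> Pcoef l (rcons a 0%N) = Pcoef l a.
Proof.
by move=> pl; rewrite !Pcoef_upchains upchains_rcons0 //; apply: partition_nth_gt0.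
Qed.

Lemma Kcoef_rcons0 d (P : finPOrderType d) a : Kcoef P (rcons a 0%N) = Kcoef P a.
Proof. by rewrite !Kcoef_upchains upchains_rcons0. Qed.

Lemma is_partition_eq l1 l2 :
  is_partition l1 -> is_partition l2 -> perm_eq l1 l2 -> l1 = l2.
Proof.
move=> /andP[s1 _] /andP[s2 _]; apply: sorted_eq s1 s2.
  by move=> x y z yx zy; apply: leq_trans zy yx.
by move=> x y /andP[yx xy]; apply/eqP; rewrite eqn_leq; apply/andP.
Qed.

Lemma is_partition_sort s : all (leq 1) s -> is_partition (sort geq s).
Proof.
move=> ps; rewrite /is_partition (sort_sorted (fun x y => leq_total y x)).
by rewrite (perm_all _ (permEl (perm_sort _ _))).
Qed.

Lemma size_le_sumn s : all (leq 1) s -> (size s <= sumn s)%N.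
Proof. by elim: s => //= x s IH /andP[x1 /IH]; lia. Qed.

Lemma pdual_Pcoef_ge0 al mu : is_partition mu -> 0 <= pdual al (fun b => (Pcoef mu b)%:R).
Proof.
move=> pmu; rewrite (eq_pdual _ (fun b => congr1 _ (Pcoef_upchains mu b))).
by apply: pdual_upchains_ge0; [apply: partition_nth_gt0 | apply: antichain_trans].
Qed.

Lemma pdual_Pcoef_neq0 lam mu : is_partition lam -> is_partition mu ->
  (pdual lam (fun b => (Pcoef mu b)%:R) != 0) = (lam == mu).
Proof.
move=> plam pmu; rewrite (eq_pdual _ (fun b => congr1 _ (Pcoef_upchains mu b))).
apply/idP/eqP => [|<-].
  move/(pdual_antichain_neq0 (partition_nth_gt0 pmu)) => cnt.
  apply: is_partition_eq => //; apply/allP=> v _; rewrite /= cnt count_mem_card.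
  by apply/eqP/eq_card => j; rewrite !inE.
apply/(pdual_antichain_neq0 (partition_nth_gt0 plam)) => v.
by rewrite count_mem_card; apply: eq_card => j; rewrite !inE.
Qed.

Lemma pdual_Kcoef_ge0 d (P : finPOrderType d) al :
  0 <= pdual al (fun b => (Kcoef P b)%:R).
Proof.
rewrite (eq_pdual _ (fun b => congr1 _ (Kcoef_upchains P b))).
by apply: pdual_upchains_ge0 => // x y z; apply: lt_trans.
Qed.

Lemma pdual_Kcoef_eq0 d (P : finPOrderType d) al :
  sumn al != #|P| -> pdual al (fun b => (Kcoef P b)%:R) = 0.
Proof.
move=> hal; rewrite (eq_pdual _ (fun b => congr1 _ (Kcoef_upchains P b))).
apply: pdual_upchains_eq0 => // [x y z|]; first exact: lt_trans.
by rewrite /weight sum1_card cardsT.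
Qed.

Section SumKcoef.
Variables (m : nat) (d : 'I_m -> Order.disp_t) (P : forall i : 'I_m, finPOrderType (d i)).

Lemma pdual_sum_Kcoef al :
  pdual al (fun b => (\sum_(i < m) Kcoef (P i) b)%:R) =
  \sum_(i < m) pdual al (fun b => (Kcoef (P i) b)%:R).
Proof. by rewrite -pdual_sum; apply: eq_pdual => b; rewrite natr_sum. Qed.

Lemma pdual_sum_Kcoef_ge0 al : 0 <= pdual al (fun b => (\sum_(i < m) Kcoef (P i) b)%:R).
Proof. by rewrite pdual_sum_Kcoef sumr_ge0 // => i _; apply: pdual_Kcoef_ge0. Qed.

Lemma pdual_sum_Kcoef_eq0 al : (\sum_(i < m) #|P i| < sumn al)%N ->
  pdual al (fun b => (\sum_(i < m) Kcoef (P i) b)%:R) = 0.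
Proof.
move=> lt_Psum; rewrite pdual_sum_Kcoef big1 // => i _; apply: pdual_Kcoef_eq0.
by apply: contraTneq lt_Psum => ->; rewrite -leqNgt (bigD1 i) //= leq_addr.
Qed.

End SumKcoef.

Section SymmetricCoefficients.
Variable G : seq nat -> rat.
Hypothesis G_perm : forall a b, perm_eq a b -> G a = G b.

Lemma G_sort a : G (sort geq a) = G a.
Proof. by apply: G_perm; apply: permEl; apply: perm_sort. Qed.

(* Induction on [sumn lam - size lam]: a composition of [sumn lam] longer
   than [lam] sorts to a partition of smaller measure, so [pdual_lead]
   applies. *)
Lemma symmetric_eq0_on_partitions :
  (forall lam, is_partition lam -> pdual lam G = 0) ->
  forall lam, is_partition lam -> G lam = 0.
Proof.
move=> G_pdual lam; have [k] := ubnP (sumn lam - size lam).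
elim: k lam => // k IH lam hk plam; have lam_gt0 := proj2 (andP plam).
have Z : zero_on_long (sumn lam) (size lam).+1 G.
  move=> c pc sc tc; rewrite -G_sort; apply: IH; last exact: is_partition_sort.
  rewrite size_sort (perm_sumn (permEl (perm_sort geq c))) sc.
  by have := size_le_sumn pc; rewrite sc; lia.
have prod_gt0 : 0 < \prod_(x <- lam) (x%:R : rat).
  by rewrite big_seq prodr_gt0 // => x xlam; rewrite ltr0n (allP lam_gt0).
move: (G_pdual lam plam); rewrite (pdual_lead lam_gt0 Z) => /eqP.
by rewrite mulf_eq0 (gt_eqF prod_gt0) => /eqP.
Qed.

Hypothesis G_rcons0 : forall a, G (rcons a 0%N) = G a.

Lemma symmetric_eq0 :
  (forall lam, is_partition lam -> G lam = 0) -> forall a, G a = 0.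
Proof.
move=> G_lam a.
have G_nseq0 k s : G (s ++ nseq k 0%N) = G s.
  by elim: k => [|k IHk]; rewrite ?cats0 // -addn1 nseqD catA cats1 G_rcons0.
rewrite -(G_perm (permEl (perm_filterC (leq 1) a))).
set zeros := [seq x <- a | predC (leq 1) x].
have -> : zeros = nseq (size zeros) 0%N.
  by apply/all_pred1P/allP=> x; rewrite mem_filter /= => /andP[]; case: x.
rewrite G_nseq0 -G_sort G_lam //.
by apply: is_partition_sort; apply: filter_all.
Qed.

End SymmetricCoefficients.

Fixpoint bounded_seqs (N k : nat) : seq (seq nat) :=
  if k is k'.+1 then [seq x :: s | x <- iota 0 N.+1, s <- bounded_seqs N k'] else [:: [::]].

Lemma mem_bounded_seqs N s :
  all (fun x => x <= N)%N s -> s \in bounded_seqs N (size s).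
Proof.
elim: s => [|x s IH]; first by rewrite mem_seq1.
case/andP=> xN /IH sN; apply: (allpairs_f (fun x s => x :: s)) sN.
by rewrite mem_iota add0n ltnS.
Qed.

Definition bounded_partitions (N : nat) : seq (seq nat) :=
  undup [seq l <- flatten [seq bounded_seqs N k | k <- iota 0 N.+1] |
           is_partition l && (sumn l <= N)%N].

Lemma mem_bounded_partitions N l :
  (l \in bounded_partitions N) = is_partition l && (sumn l <= N)%N.
Proof.
rewrite mem_undup mem_filter andbC.
case: (boolP (is_partition l && _)) => [/andP[/andP[_ pl] lN]|_]; last by rewrite andbF.
rewrite andbT; apply/flattenP; exists (bounded_seqs N (size l)).
  by apply: map_f; rewrite mem_iota add0n ltnS (leq_trans (size_le_sumn pl)).
apply: mem_bounded_seqs; apply/allP=> x xl; apply: leq_trans lN.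
by rewrite (perm_sumn (perm_to_rem xl)) /= leq_addr.
Qed.

Definition pcoeff (F : seq nat -> rat) (mu : seq nat) : rat :=
  if is_partition mu then pdual mu F / pdual mu (fun b => (Pcoef mu b)%:R) else 0.

Lemma pcoeff_ge0 (F : seq nat -> rat) mu :
  (forall al, 0 <= pdual al F) -> 0 <= pcoeff F mu.
Proof.
by move=> F_ge0; rewrite /pcoeff; case: ifP => // pmu; rewrite divr_ge0 ?pdual_Pcoef_ge0.
Qed.

Lemma pdual_pexpansion_eq0 (F : seq nat -> rat) N lam : is_partition lam ->
  (forall al, pdual al F != 0 -> (sumn al <= N)%N) ->
  pdual lam (fun b => F b - \sum_(mu <- bounded_partitions N) pcoeff F mu * (Pcoef mu b)%:R)
  = 0.
Proof.
move=> plam F_supp; rewrite pdualB.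
rewrite (pdual_sum _ _ (fun mu b => pcoeff F mu * (Pcoef mu b)%:R)).
under eq_bigr do rewrite pdualZ.
have other mu : mu != lam -> mu \in bounded_partitions N ->
    pcoeff F mu * pdual lam (fun b => (Pcoef mu b)%:R) = 0.
  move=> nmu; rewrite mem_bounded_partitions => /andP[pmu _]; apply/eqP.
  by rewrite mulf_eq0 -[pdual _ _ == 0]negbK pdual_Pcoef_neq0 // (eq_sym lam) nmu orbT.
have [lamL|lamNL] := boolP (lam \in bounded_partitions N).
  rewrite (bigD1_seq lam) ?undup_uniq //= big1_seq ?addr0 => [|mu /andP[]];
    last exact: other.
  by rewrite /pcoeff plam divfK ?subrr // pdual_Pcoef_neq0.
rewrite big1_seq ?subr0 => [|mu /andP[_ muL]]; last first.
  by rewrite other //; apply: contraNneq lamNL => <-.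
apply/eqP; apply: contraR lamNL => /F_supp.
by rewrite mem_bounded_partitions plam.
Qed.

Theorem corollary4p3 (m : nat) (d : 'I_m -> Order.disp_t)
    (P : forall i : 'I_m, finPOrderType (d i)) :
  (forall a b : seq nat, perm_eq a b ->
     (\sum_(i < m) Kcoef (P i) a = \sum_(i < m) Kcoef (P i) b)%N) ->
  exists (L : seq (seq nat)) (c : seq nat -> rat),
    all is_partition L /\ (forall l, 0 <= c l) /\
    forall a : seq nat,
      (\sum_(i < m) Kcoef (P i) a)%:R = \sum_(l <- L) c l * (Pcoef l a)%:R.
Proof.
move=> K_sym; pose F b : rat := (\sum_(i < m) Kcoef (P i) b)%:R.
pose N := (\sum_(i < m) #|P i|)%N.
pose G b := F b - \sum_(mu <- bounded_partitions N) pcoeff F mu * (Pcoef mu b)%:R.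
have G_perm a b : perm_eq a b -> G a = G b.
  move=> ab; rewrite /G /F (K_sym _ _ ab); congr (_ - _).
  by apply: eq_big_seq => mu _; rewrite (Pcoef_perm _ ab).
have G_rcons0 a : G (rcons a 0%N) = G a.
  rewrite /G /F; under eq_bigr do rewrite Kcoef_rcons0; congr (_ - _).
  apply: eq_big_seq => mu; rewrite mem_bounded_partitions => /andP[pmu _].
  by rewrite Pcoef_rcons0.
exists (bounded_partitions N), (pcoeff F); split; [|split].
- by apply/allP=> l; rewrite mem_bounded_partitions => /andP[].
- by move=> l; apply: pcoeff_ge0 => al; apply: pdual_sum_Kcoef_ge0.
move=> a; apply/eqP; rewrite -subr_eq0; apply/eqP; move: a.
apply: (symmetric_eq0 G_perm G_rcons0); apply: (symmetric_eq0_on_partitions G_perm).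
move=> lam plam; apply: pdual_pexpansion_eq0 => // al.
by apply: contraR; rewrite -ltnNge => /pdual_sum_Kcoef_eq0 ->.
Qed.
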